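(* Let $m\ge 2$ and consider the memristive Hopfield neural network $$\frac{du_i}{dt}=-a_iu_i+\sum_{j=1}^m w_{ij}f_j(u_j)+k\,\varphi_i(\rho)\,u_i+J_i-P\,u_i\sum_{j=1}^m\Gamma(u_j),\quad 1\le i\le m,\qquad \frac{d\rho}{dt}=\sum_{i=1}^m\gamma_iu_i-b\rho,$$ where $\Gamma(s)=\dfrac{1}{1+\exp[-r(s-V)]}$ with $r>0$, $V\in\mathbb{R}$, $P>0$; $a_i,b,\beta,\eta_i,k>0$; $w_{ij},J_i,\gamma_i\in\mathbb{R}$; $f_i,\varphi_i$ locally Lipschitz with $a_i>k$, $|f_i(s)|\le\beta$, $\varphi_i(s)=1-\eta_is^2$ for all $s\in\mathbb{R}$, $1\le i\le m$. Define $a=\min_ia_i$, $W=\max_{i,j}|w_{ij}|$, $J=\max_i|J_i|$, $\gamma^2=\max_i\gamma_i^2$, $$C_1=\frac{1}{a-k}\Big(\frac{m\gamma^2}{b}+b\Big),\ C_2=\Big(\frac{m\gamma^2}{b}+b\Big)\frac{m(mW\beta+J)^2}{(a-k)^2},\ \mu_0=b\min\Big\{\frac1{C_1},1\Big\},\ Q=1+\frac{C_2}{\mu_0\min\{C_1,1\}},$$ and $a^*=\max_{i,j}|a_i-a_j|$, $W^*=\max_{i,j,\ell}|w_{i\ell}-w_{j\ell}|$, $\eta^*=\max_{i,j}|\eta_i-\eta_j|$, $J^*=\max_{i,j}|J_i-J_j|$. For $\varepsilon>0$ let $$P^*(\varepsilon)=\frac{1}{m\varepsilon}\big(mW^*\beta+a^*Q^{1/2}+k\eta^*Q^{3/2}+J^*\big)\big[1+\exp\{r(\sqrt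 Q+|V|)\}\big].$$ Then for every $\varepsilon>0$, if $P>P^*(\varepsilon)$, the network is approximately synchronized: $$\sup_{g^0\in\mathbb{R}^{m+1}}\ \max_{1\le i<j\le m}\ \limsup_{t\to\infty}|u_i(t)-u_j(t)|<\varepsilon,$$ where $(u_1,\dots,u_m,\rho)$ is the solution with initial state $g^0$, and this convergence occurs at the uniform exponential rate $$\mu(P)=(a-k)+\frac{mP}{1+\exp\{r(\sqrt Q+|V|)\}}>0,$$ in the sense that there is a constant $D<\varepsilon$ (independent of the initial state) such that for every initial state there is $T\ge0$ with $|u_i(t)-u_j(t)|^2\le e^{-\mu(P)(t-T)}|u_i(T)-u_j(T)|^2+D^2$ for all $t>T$ and all $i\ne j$.
   Context: The paper calls a network approximately synchronizable if for every prescribed gap $\varepsilon>0$ there is a threshold on the coupling parameter beyond which the synchronous degree $\sup_{g^0}\max_{i<j}\limsup_{t\to\infty}|u_i(t)-u_j(t)|$ is less than $\varepsilon$; if the limsup convergence admits a uniform exponential rate, it is called approximate exponential synchronization. Solutions exist globally in time for every initial state. *)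

From Stdlib Require Import Reals Lra List.
From Coquelicot Require Import Coquelicot.
Open Scope R_scope.

Definition maxi (m : nat) (g : nat -> R) : R :=
  fold_right Rmax (g 0%nat) (map g (seq 0 m)).
Definition mini (m : nat) (g : nat -> R) : R :=
  fold_right Rmin (g 0%nat) (map g (seq 0 m)).

Definition locally_lipschitz (f : R -> R) : Prop :=
  forall M : R, exists L : R, forall x y : R,
    Rabs x <= M -> Rabs y <= M -> Rabs (f x - f y) <= L * Rabs (x - y).

Definition sup_from (g : R -> R) (T : R) : Rbar :=
  Lub_Rbar (fun y => exists t, T <= t /\ y = g t).
Definition limsup_infty (g : R -> R) : Rbar :=
  Glb_Rbar (fun z => exists T : R, z = sup_from g T).

Definition Gam (r V s : R) : R := 1 / (1 + exp (- r * (s - V))).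

Definition sumi (m : nat) (g : nat -> R) : R :=
  fold_right Rplus 0 (map g (seq 0 m)).

Definition is_solution (m : nat) (a : nat -> R) (w : nat -> nat -> R)
  (f phi : nat -> R -> R) (k : R) (J : nat -> R) (P r V : R)
  (gam : nat -> R) (b : R) (u : nat -> R -> R) (rho : R -> R) : Prop :=
  forall t : R, 0 < t ->
    (forall i : nat, (i < m)%nat ->
       derivable_pt_lim (u i) t
         (- a i * u i t + sumi m (fun j => w i j * f j (u j t))
          + k * phi i (rho t) * u i t + J i
          - P * u i t * sumi m (fun j => Gam r V (u j t)))) /\
    derivable_pt_lim rho t (sumi m (fun i => gam i * u i t) - b * rho t).

(* Since [phi_i(rho) <= 1] and the sigmoid
   coupling [- P u_i^2 sum_j Gamma(u_j)] only dissipates, the energy [y = sum_i u_i^2]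
   satisfies [y' <= -(a - k) y + const]; a trajectory therefore enters in finite time
   the ball [|u_l| <= sqrt Q, rho^2 <= Q], the bound on [rho] coming from the same
   argument applied to [rho^2].  On that ball every [Gamma(u_j)] is at least [1/E] with
   [E = 1 + exp (r (sqrt Q + |V|))], so for a pair [i, j] the square [d] of
   [u_i - u_j] satisfies [d' <= - mu(P) d + K^2 / mu(P)], where
   [K = m W* beta + a* sqrt Q + k eta* Q^(3/2) + J*] measures the mismatch of the
   parameters.  Comparison with the linear equation gives
   [d(t) <= exp (- mu (t - T)) d(T) + (K / mu)^2], and
   [K / mu(P) <= K E / (m P) < eps] as soon as [P > P*(eps)]. *)

From Stdlib Require Import Reals Lra Lia List.
From Coquelicot Require Import Coquelicot.
Open Scope R_scope.

Lemma maxi_ge m g i : (i < m)%nat -> g i <= maxi m g.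
Proof.
  intros Hi. unfold maxi.
  assert (Hin : In (g i) (map g (seq 0 m))) by (apply in_map, in_seq; lia).
  revert Hin; generalize (map g (seq 0 m)) as l.
  induction l as [|x l IH]; simpl; [tauto|].
  intros [<- | Hin]; [apply Rmax_l | eapply Rle_trans; [apply IH, Hin | apply Rmax_r]].
Qed.

Lemma maxi2_ge m (g : nat -> nat -> R) i j : (i < m)%nat -> (j < m)%nat ->
  g i j <= maxi m (fun i => maxi m (fun j => g i j)).
Proof.
  intros Hi Hj. eapply Rle_trans; [apply (maxi_ge m (g i)), Hj |].
  apply (maxi_ge m (fun i => maxi m (g i))), Hi.
Qed.

Lemma maxi3_ge m (g : nat -> nat -> nat -> R) i j l :
  (i < m)%nat -> (j < m)%nat -> (l < m)%nat ->
  g i j l <= maxi m (fun i => maxi m (fun j => maxi m (fun l => g i j l))).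
Proof.
  intros Hi Hj Hl. eapply Rle_trans; [apply (maxi_ge m (g i j)), Hl |].
  apply (maxi2_ge m (fun i j => maxi m (g i j))); assumption.
Qed.

Lemma mini_le m g i : (i < m)%nat -> mini m g <= g i.
Proof.
  intros Hi. unfold mini.
  assert (Hin : In (g i) (map g (seq 0 m))) by (apply in_map, in_seq; lia).
  revert Hin; generalize (map g (seq 0 m)) as l.
  induction l as [|x l IH]; simpl; [tauto|].
  intros [<- | Hin]; [apply Rmin_l | eapply Rle_trans; [apply Rmin_r | apply IH, Hin]].
Qed.

Lemma mini_glb_lt m g c : (0 < m)%nat -> (forall i, (i < m)%nat -> c < g i) -> c < mini m g.
Proof.
  intros Hm Hg. unfold mini.
  assert (Hl : forall x, In x (map g (seq 0 m)) -> c < x).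
  { intros x Hx. apply in_map_iff in Hx as [i [<- Hi]]. apply in_seq in Hi. apply Hg; lia. }
  assert (H0 : c < g 0%nat) by (apply Hg, Hm).
  revert Hl; generalize (map g (seq 0 m)) as l.
  induction l as [|x l IH]; simpl; intros Hl; [exact H0|].
  apply Rmin_glb_lt; [apply Hl; left | apply IH; intros; apply Hl; right]; auto.
Qed.

Lemma sumi_S m g : sumi (S m) g = g 0%nat + sumi m (fun i => g (S i)).
Proof. unfold sumi. cbn [seq map fold_right]. rewrite <- seq_shift, map_map. reflexivity. Qed.

Lemma sumi_le m g h : (forall i, (i < m)%nat -> g i <= h i) -> sumi m g <= sumi m h.
Proof.
  revert g h; induction m as [|m IH]; intros g h H; [unfold sumi; simpl; lra|].
  rewrite !sumi_S. apply Rplus_le_compat; [apply H; lia | apply IH; intros; apply H; lia].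
Qed.

Lemma sumi_const m c : sumi m (fun _ => c) = INR m * c.
Proof. induction m as [|m IH]; [unfold sumi; simpl; ring|]. rewrite sumi_S, IH, S_INR. ring. Qed.

Lemma sumi_nonneg m g : (forall i, (i < m)%nat -> 0 <= g i) -> 0 <= sumi m g.
Proof. intros H. rewrite <- (Rmult_0_r (INR m)), <- sumi_const. apply sumi_le, H. Qed.

Lemma sumi_ge_term m g i : (forall j, (j < m)%nat -> 0 <= g j) -> (i < m)%nat -> g i <= sumi m g.
Proof.
  revert g i; induction m as [|m IH]; intros g i Hg Hi; [lia|]. rewrite sumi_S.
  destruct i as [|i].
  - assert (0 <= sumi m (fun j => g (S j))) by (apply sumi_nonneg; intros; apply Hg; lia). lra.
  - assert (g (S i) <= sumi m (fun j => g (S j)))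
      by (apply (IH (fun j => g (S j))); [intros; apply Hg|]; lia).
    assert (0 <= g 0%nat) by (apply Hg; lia). lra.
Qed.

Lemma sumi_plus m g h : sumi m (fun i => g i + h i) = sumi m g + sumi m h.
Proof. unfold sumi. induction (seq 0 m) as [|x l IH]; simpl; lra. Qed.

Lemma sumi_scal m c g : sumi m (fun i => c * g i) = c * sumi m g.
Proof. unfold sumi. induction (seq 0 m) as [|x l IH]; simpl; [ring | rewrite IH; ring]. Qed.

Lemma sumi_ext m g h : (forall i, (i < m)%nat -> g i = h i) -> sumi m g = sumi m h.
Proof.
  intros H. apply Rle_antisym; apply sumi_le; intros i Hi; rewrite H by exact Hi; apply Rle_refl.
Qed.

Lemma sumi_minus m g h : sumi m (fun i => g i - h i) = sumi m g - sumi m h.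
Proof. unfold sumi. induction (seq 0 m) as [|x l IH]; simpl; lra. Qed.

Lemma Rabs_sumi_le m g : Rabs (sumi m g) <= sumi m (fun i => Rabs (g i)).
Proof.
  unfold sumi. induction (seq 0 m) as [|x l IH]; simpl.
  - rewrite Rabs_R0; lra.
  - eapply Rle_trans; [apply Rabs_triang | lra].
Qed.

Lemma Rabs_sumi_mult_le m c g B beta :
  (forall l, (l < m)%nat -> Rabs (c l) <= B) -> (forall l, (l < m)%nat -> Rabs (g l) <= beta) ->
  Rabs (sumi m (fun l => c l * g l)) <= INR m * B * beta.
Proof.
  intros Hc Hg. eapply Rle_trans; [apply Rabs_sumi_le|].
  rewrite Rmult_assoc, <- sumi_const. apply sumi_le. intros l Hl.
  rewrite Rabs_mult. apply Rmult_le_compat; auto using Rabs_pos.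
Qed.

Lemma derivable_pt_lim_sumi m (F : nat -> R -> R) (dF : nat -> R) t :
  (forall i, (i < m)%nat -> derivable_pt_lim (F i) t (dF i)) ->
  derivable_pt_lim (fun s => sumi m (fun i => F i s)) t (sumi m dF).
Proof.
  revert F dF; induction m as [|m IH]; intros F dF H; [apply derivable_pt_lim_const|].
  rewrite sumi_S. apply is_derive_Reals.
  apply (is_derive_ext (fun s => F 0%nat s + sumi m (fun i => F (S i) s))).
  { intros s. symmetry. apply sumi_S. }
  apply is_derive_Reals, (derivable_pt_lim_plus (F 0%nat) (fun s => sumi m (fun i => F (S i) s))).
  - apply H; lia.
  - apply IH; intros; apply H; lia.
Qed.

Lemma derivable_pt_lim_sq f t l :
  derivable_pt_lim f t l -> derivable_pt_lim (fun s => f s ^ 2) t (2 * f t * l).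
Proof.
  intros H. apply is_derive_Reals. apply is_derive_Reals in H.
  replace (2 * f t * l) with (INR 2 * l * f t ^ Init.Nat.pred 2) by (simpl; ring).
  apply is_derive_pow, H.
Qed.

Lemma exp_le_compat x y : x <= y -> exp x <= exp y.
Proof. intros [H | ->]; [left; apply exp_increasing, H | apply Rle_refl]. Qed.

Lemma Rabs_le_sqrt x Q : x ^ 2 <= Q -> Rabs x <= sqrt Q.
Proof. intros H. rewrite <- sqrt_Rsqr_abs. apply sqrt_le_1_alt. unfold Rsqr. lra. Qed.

Lemma Rabs_plus4_le x1 x2 x3 x4 :
  Rabs (x1 + x2 + x3 + x4) <= Rabs x1 + Rabs x2 + Rabs x3 + Rabs x4.
Proof.
  pose proof (Rabs_triang (x1 + x2 + x3) x4). pose proof (Rabs_triang (x1 + x2) x3).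
  pose proof (Rabs_triang x1 x2). lra.
Qed.

Lemma two_mul_le_young x K α : 0 < α -> 2 * x * K <= α * x ^ 2 + K ^ 2 / α.
Proof.
  intros Hα.
  assert (H : 0 <= (α * x - K) ^ 2 / α) by (apply Rdiv_le_0_compat; [apply pow2_ge_0 | lra]).
  replace ((α * x - K) ^ 2 / α) with (α * x ^ 2 - 2 * x * K + K ^ 2 / α) in H by (field; lra).
  lra.
Qed.

Lemma dissipation_estimate U F c R α K :
  0 < α -> α <= c -> Rabs R <= K -> F = - c * U + R ->
  2 * U * F <= - α * U ^ 2 + K ^ 2 / α.
Proof.
  intros Hα Hc HR ->.
  assert (HUR : U * R <= Rabs U * K).
  { eapply Rle_trans; [apply Rle_abs|]. rewrite Rabs_mult.
    apply Rmult_le_compat_l; [apply Rabs_pos | exact HR]. }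
  pose proof (two_mul_le_young (Rabs U) K α Hα) as HY.
  rewrite pow2_abs in HY.
  assert (α * U ^ 2 <= c * U ^ 2) by (apply Rmult_le_compat_r; [apply pow2_ge_0 | exact Hc]).
  lra.
Qed.

Lemma Gam_pos r V s : 0 < Gam r V s.
Proof. unfold Gam. pose proof (exp_pos (- r * (s - V))). apply Rdiv_lt_0_compat; lra. Qed.

Lemma Gam_ge r V R0 s : 0 < r -> Rabs s <= R0 ->
  / (1 + exp (r * (R0 + Rabs V))) <= Gam r V s.
Proof.
  intros Hr Hs. unfold Gam, Rdiv. rewrite Rmult_1_l.
  apply Rinv_le_contravar; [pose proof (exp_pos (- r * (s - V))); lra|].
  apply Rplus_le_compat_l, exp_le_compat.
  pose proof (Rabs_maj2 s). pose proof (Rle_abs V). nra.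
Qed.

Definition dissipative_from (y dy : R -> R) (α c t0 : R) : Prop :=
  forall t, t0 <= t -> derivable_pt_lim y t (dy t) /\ dy t <= - α * y t + c.

Lemma dissipative_from_decay y dy α c t0 : 0 < α -> dissipative_from y dy α c t0 ->
  forall t, t0 <= t -> y t <= exp (- α * (t - t0)) * (y t0 - c / α) + c / α.
Proof.
  intros Hα Hdis t [Ht | <-]; [| rewrite Rminus_diag, Rmult_0_r, exp_0; lra].
  (* [exp (α s) * (y s - c / α)] is nonincreasing *)
  set (g := fun s => exp (α * s) * (y s - c / α)).
  set (dg := fun s => exp (α * s) * (dy s + α * y s - c)).
  destruct (MVT_cor2 g dg t0 t Ht) as [s [Hmvt Hs]].
  { intros s Hs. unfold g, dg.
    replace (exp (α * s) * (dy s + α * y s - c))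
      with (α * exp (α * s) * (y s - c / α) + exp (α * s) * (dy s - 0)) by (field; lra).
    apply (derivable_pt_lim_mult (fun s => exp (α * s)) (fun s => y s - c / α)).
    - apply is_derive_Reals. auto_derive; auto; ring.
    - apply derivable_pt_lim_minus; [apply Hdis; lra | apply derivable_pt_lim_const]. }
  assert (Hdg : dg s <= 0).
  { unfold dg. pose proof (proj2 (Hdis s ltac:(lra))). pose proof (exp_pos (α * s)). nra. }
  assert (Hg : g t <= g t0) by nra.
  pose proof (exp_pos (- α * t)) as Hpos.
  assert (Hgt : exp (- α * t) * g t <= exp (- α * t) * g t0) by (apply Rmult_le_compat_l; lra).
  unfold g in Hgt. rewrite <- Rmult_assoc, <- exp_plus in Hgt.
  replace (- α * t + α * t) with 0 in Hgt by ring. rewrite exp_0 in Hgt.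
  replace (exp (- α * (t - t0))) with (exp (- α * t) * exp (α * t0))
    by (rewrite <- exp_plus; f_equal; ring).
  lra.
Qed.

Lemma dissipative_from_bound y dy α c t0 : 0 < α -> 0 <= c -> dissipative_from y dy α c t0 ->
  forall t, t0 <= t -> y t <= exp (- α * (t - t0)) * y t0 + c / α.
Proof.
  intros Hα Hc Hdis t Ht. pose proof (dissipative_from_decay y dy α c t0 Hα Hdis t Ht).
  pose proof (exp_pos (- α * (t - t0))).
  assert (0 <= c / α) by (apply Rdiv_le_0_compat; lra).
  nra.
Qed.

Lemma exp_neg_mul_le x A δ : 0 <= A -> 0 < δ -> A / δ <= x -> exp (- x) * A <= δ.
Proof.
  intros HA Hδ Hx.
  assert (HAx : A <= δ * exp x).
  { pose proof (exp_ineq1_le x). apply (Rmult_le_compat_l δ) in Hx; [|lra].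
    replace (δ * (A / δ)) with A in Hx by (field; lra). nra. }
  pose proof (exp_pos (- x)).
  apply Rle_trans with (exp (- x) * (δ * exp x)); [apply Rmult_le_compat_l; lra|].
  right. rewrite (Rmult_comm δ), <- Rmult_assoc, <- exp_plus, Rplus_opp_l, exp_0. ring.
Qed.

Lemma dissipative_eventually_le y dy α c t0 δ :
  0 < α -> 0 < δ -> dissipative_from y dy α c t0 ->
  exists T, t0 <= T /\ forall t, T <= t -> y t <= c / α + δ.
Proof.
  intros Hα Hδ Hdis. set (A := Rabs (y t0 - c / α)).
  assert (HA : 0 <= A / δ) by (apply Rdiv_le_0_compat; [apply Rabs_pos | lra]).
  assert (Hα' : 0 <= A / δ / α) by (apply Rdiv_le_0_compat; lra).
  exists (t0 + A / δ / α). split; [lra|]. intros t Ht.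
  pose proof (dissipative_from_decay y dy α c t0 Hα Hdis t ltac:(lra)) as Hdec.
  assert (Hsmall : exp (- (α * (t - t0))) * A <= δ).
  { apply exp_neg_mul_le; [apply Rabs_pos | exact Hδ |].
    apply (Rmult_le_compat_l α) in Ht; [|lra].
    replace (α * (t0 + A / δ / α)) with (α * t0 + A / δ) in Ht by (field; lra). lra. }
  replace (- (α * (t - t0))) with (- α * (t - t0)) in Hsmall by ring.
  pose proof (exp_pos (- α * (t - t0))).
  assert (exp (- α * (t - t0)) * (y t0 - c / α) <= exp (- α * (t - t0)) * A)
    by (apply Rmult_le_compat_l; [lra | apply Rle_abs]).
  lra.
Qed.

Lemma limsup_infty_le g T c : (forall t, T <= t -> g t <= c) -> Rbar_le (limsup_infty g) c.
Proof.
  intros Hg. unfold limsup_infty.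
  destruct (Glb_Rbar_correct (fun z => exists T, z = real (sup_from g T))) as [Hlb _].
  eapply Rbar_le_trans; [apply (Hlb (real (sup_from g T))); exists T; reflexivity|].
  assert (Hsup : Rbar_le (sup_from g T) c).
  { apply Lub_Rbar_correct. intros x [t [Ht ->]]. apply Hg, Ht. }
  assert (Hge : Rbar_le (g T) (sup_from g T)).
  { apply Lub_Rbar_correct. exists T. split; [apply Rle_refl | reflexivity]. }
  destruct (sup_from g T); simpl in *; [exact Hsup | contradiction | contradiction].
Qed.

Lemma limsup_abs_le_of_dissipative g dy α c t0 D :
  0 < α -> 0 <= D -> c / α < D ^ 2 -> dissipative_from (fun t => g t ^ 2) dy α c t0 ->
  Rbar_le (limsup_infty (fun t => Rabs (g t))) D.
Proof.
  intros Hα HD Hc Hdis.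
  destruct (dissipative_eventually_le _ _ α c t0 (D ^ 2 - c / α) Hα ltac:(lra) Hdis)
    as [T [_ HT]].
  apply (limsup_infty_le _ T). intros t Ht.
  rewrite <- (sqrt_pow2 D HD). apply Rabs_le_sqrt. specialize (HT t Ht). lra.
Qed.

Section Network.

Context {m : nat} {a : nat -> R} {w : nat -> nat -> R} {f phi : nat -> R -> R}
  {k : R} {J : nat -> R} {P r V : R} {gam : nat -> R} {b : R}
  {u : nat -> R -> R} {rho : R -> R}.

Definition u_rhs (i : nat) (t : R) : R :=
  - a i * u i t + sumi m (fun j => w i j * f j (u j t))
  + k * phi i (rho t) * u i t + J i - P * u i t * sumi m (fun j => Gam r V (u j t)).

Definition rho_rhs (t : R) : R := sumi m (fun i => gam i * u i t) - b * rho t.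

Hypothesis Hsol : is_solution m a w f phi k J P r V gam b u rho.

Context {beta amin W Jm gam2 : R} {eta : nat -> R}.
Hypotheses (Hm : (0 < m)%nat) (Hk : 0 < k) (Hb : 0 < b) (HP : 0 <= P) (Hka : k < amin)
  (Ha : forall i, (i < m)%nat -> amin <= a i)
  (Heta : forall i, (i < m)%nat -> 0 <= eta i)
  (Hphi : forall i s, (i < m)%nat -> phi i s = 1 - eta i * s ^ 2)
  (Hf : forall i s, (i < m)%nat -> Rabs (f i s) <= beta)
  (HW : forall i j, (i < m)%nat -> (j < m)%nat -> Rabs (w i j) <= W)
  (HJ : forall i, (i < m)%nat -> Rabs (J i) <= Jm)
  (Hgam : forall i, (i < m)%nat -> gam i ^ 2 <= gam2).

Lemma u_energy_dissipation i t : (i < m)%nat ->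
  2 * u i t * u_rhs i t <= - (amin - k) * u i t ^ 2 + (INR m * W * beta + Jm) ^ 2 / (amin - k).
Proof.
  intros Hi. unfold u_rhs. rewrite Hphi by exact Hi.
  set (S := sumi m (fun j => Gam r V (u j t))).
  assert (HS : 0 <= S) by (apply sumi_nonneg; intros; left; apply Gam_pos).
  apply (dissipation_estimate _ _ (a i - k + k * eta i * rho t ^ 2 + P * S)
           (sumi m (fun j => w i j * f j (u j t)) + J i)).
  - lra.
  - assert (0 <= k * eta i * rho t ^ 2).
    { apply Rmult_le_pos; [apply Rmult_le_pos; [lra | apply Heta, Hi] | apply pow2_ge_0]. }
    assert (0 <= P * S) by (apply Rmult_le_pos; lra).
    specialize (Ha i Hi). lra.
  - eapply Rle_trans; [apply Rabs_triang|]. apply Rplus_le_compat; [|apply HJ, Hi].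
    apply Rabs_sumi_mult_le; intros; [apply HW | apply Hf]; auto.
  - ring.
Qed.

Lemma sum_sq_u_eventually_le δ : 0 < δ -> exists T, 1 <= T /\ forall t, T <= t ->
  sumi m (fun i => u i t ^ 2) <= INR m * (INR m * W * beta + Jm) ^ 2 / (amin - k) ^ 2 + δ.
Proof.
  intros Hδ. set (α := amin - k). set (Ku := INR m * W * beta + Jm).
  assert (Hα : 0 < α) by (unfold α; lra).
  replace (INR m * Ku ^ 2 / α ^ 2) with (INR m * (Ku ^ 2 / α) / α) by (field; lra).
  apply (dissipative_eventually_le _ (fun t => sumi m (fun i => 2 * u i t * u_rhs i t))
           α _ 1 δ Hα Hδ).
  intros t Ht. split.
  - apply derivable_pt_lim_sumi. intros i Hi.
    apply derivable_pt_lim_sq, (proj1 (Hsol t ltac:(lra)) i Hi).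
  - rewrite <- sumi_scal, <- sumi_const, <- sumi_plus.
    apply sumi_le. intros i Hi. apply u_energy_dissipation, Hi.
Qed.

Lemma rho_energy_dissipation t :
  2 * rho t * rho_rhs t <= - b * rho t ^ 2 + INR m * gam2 / b * sumi m (fun i => u i t ^ 2).
Proof.
  assert (Hm' : 0 < INR m) by (apply lt_0_INR, Hm).
  set (p := b / INR m). assert (Hp : 0 < p) by (apply Rdiv_lt_0_compat; lra).
  assert (Hterm : forall i, (i < m)%nat ->
    2 * rho t * (gam i * u i t) <= / p * gam2 * u i t ^ 2 + p * rho t ^ 2).
  { intros i Hi. pose proof (two_mul_le_young (rho t) (gam i * u i t) p Hp) as HY.
    assert (Hg : / p * (gam i ^ 2 * u i t ^ 2) <= / p * (gam2 * u i t ^ 2)).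
    { apply Rmult_le_compat_l; [left; apply Rinv_0_lt_compat, Hp|].
      apply Rmult_le_compat_r; [apply pow2_ge_0 | apply Hgam, Hi]. }
    replace ((gam i * u i t) ^ 2 / p) with (/ p * (gam i ^ 2 * u i t ^ 2)) in HY
      by (field; lra).
    lra. }
  pose proof (sumi_le m _ _ Hterm) as Hsum.
  rewrite sumi_scal, sumi_plus, sumi_scal, sumi_const in Hsum.
  replace (INR m * (p * rho t ^ 2)) with (b * rho t ^ 2) in Hsum by (unfold p; field; lra).
  replace (INR m * gam2 / b) with (/ p * gam2) by (unfold p; field; lra).
  unfold rho_rhs. nra.
Qed.

Lemma gam2_nonneg : 0 <= gam2.
Proof. eapply Rle_trans; [apply (pow2_ge_0 (gam 0%nat)) | apply Hgam, Hm]. Qed.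

Context {Q : R}.
(* [Q >= 1 + Y G]: [Y = m (m W beta + Jm)^2 / (amin - k)^2] is the asymptotic bound on
   [sum_i u_i^2], and [(G - 1) Y] the bound it induces on [rho^2]. *)
Hypothesis HQ :
  1 + INR m * (INR m * W * beta + Jm) ^ 2 / (amin - k) ^ 2 * (1 + INR m * gam2 / b ^ 2) <= Q.

Lemma absorbing_constants_bounds :
  0 <= INR m * (INR m * W * beta + Jm) ^ 2 / (amin - k) ^ 2 /\ 1 <= 1 + INR m * gam2 / b ^ 2.
Proof.
  pose proof (pos_INR m). pose proof gam2_nonneg. split.
  - apply Rdiv_le_0_compat; [apply Rmult_le_pos; [lra | apply pow2_ge_0] | apply pow2_gt_0; lra].
  - assert (0 <= INR m * gam2 / b ^ 2); [|lra].
    apply Rdiv_le_0_compat; [apply Rmult_le_pos; lra | apply pow2_gt_0; lra].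
Qed.

Lemma absorbing_ball : exists T, 0 < T /\ forall t, T <= t ->
  (forall l, (l < m)%nat -> Rabs (u l t) <= sqrt Q) /\ rho t ^ 2 <= Q.
Proof.
  set (Y := INR m * (INR m * W * beta + Jm) ^ 2 / (amin - k) ^ 2) in HQ.
  set (G := 1 + INR m * gam2 / b ^ 2) in HQ.
  destruct absorbing_constants_bounds as [HY HG]. fold Y G in HY, HG.
  assert (HGinv : 0 < / G <= 1).
  { split; [apply Rinv_0_lt_compat; lra|]. rewrite <- Rinv_1. apply Rinv_le_contravar; lra. }
  destruct (sum_sq_u_eventually_le (/ G) ltac:(lra)) as [T1 [HT1 Hy]]. fold Y in Hy.
  destruct (dissipative_eventually_le (fun t => rho t ^ 2) (fun t => 2 * rho t * rho_rhs t)
              b (INR m * gam2 / b * (Y + / G)) T1 (/ G) Hb ltac:(lra)) as [T [HT Hz]].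
  { intros t Ht. split.
    - apply derivable_pt_lim_sq, (proj2 (Hsol t ltac:(lra))).
    - eapply Rle_trans; [apply rho_energy_dissipation|].
      apply Rplus_le_compat_l, Rmult_le_compat_l; [|apply Hy; lra].
      apply Rmult_le_pos; [apply Rmult_le_pos; [apply pos_INR | apply gam2_nonneg]|].
      left; apply Rinv_0_lt_compat, Hb. }
  exists T. split; [lra|]. intros t Ht. split.
  - intros l Hl. apply Rabs_le_sqrt.
    eapply Rle_trans.
    { apply (sumi_ge_term m (fun i => u i t ^ 2)); [intros; apply pow2_ge_0 | exact Hl]. }
    specialize (Hy t ltac:(lra)). nra.
  - specialize (Hz t Ht).
    replace (INR m * gam2 / b * (Y + / G) / b) with ((G - 1) * (Y + / G)) in Hz
      by (replace (G - 1) with (INR m * gam2 / b ^ 2) by (unfold G; ring); field; lra).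
    assert (G * / G = 1) by (apply Rinv_r; lra).
    nra.
Qed.

Context {astar Wstar etastar Jstar mu K : R}.
Hypotheses (Hr : 0 < r)
  (Hastar : forall i j, (i < m)%nat -> (j < m)%nat -> Rabs (a i - a j) <= astar)
  (HWstar : forall i j l, (i < m)%nat -> (j < m)%nat -> (l < m)%nat ->
     Rabs (w i l - w j l) <= Wstar)
  (Hetastar : forall i j, (i < m)%nat -> (j < m)%nat -> Rabs (eta i - eta j) <= etastar)
  (HJstar : forall i j, (i < m)%nat -> (j < m)%nat -> Rabs (J i - J j) <= Jstar)
  (Hmu : 0 < mu) (Hmu_le : mu <= amin - k + INR m * P / (1 + exp (r * (sqrt Q + Rabs V))))
  (HK : INR m * Wstar * beta + astar * sqrt Q + k * etastar * (Q * sqrt Q) + Jstar <= K).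

Lemma sq_diff_dissipation i j t : (i < m)%nat -> (j < m)%nat ->
  (forall l, (l < m)%nat -> Rabs (u l t) <= sqrt Q) -> rho t ^ 2 <= Q ->
  2 * (u i t - u j t) * (u_rhs i t - u_rhs j t) <= - mu * (u i t - u j t) ^ 2 + K ^ 2 / mu.
Proof.
  intros Hi Hj Hu Hrho. unfold u_rhs. rewrite !Hphi by assumption.
  set (S := sumi m (fun l => Gam r V (u l t))).
  set (E := 1 + exp (r * (sqrt Q + Rabs V))) in Hmu_le.
  assert (HS : INR m / E <= S).
  { unfold Rdiv. rewrite <- sumi_const. apply sumi_le. intros l Hl.
    apply Gam_ge, Hu, Hl; exact Hr. }
  apply (dissipation_estimate _ _ (a i - k + k * eta i * rho t ^ 2 + P * S)
    (- ((a i - a j) * u j t)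
     + (sumi m (fun l => w i l * f l (u l t)) - sumi m (fun l => w j l * f l (u l t)))
     + - (k * rho t ^ 2 * (eta i - eta j) * u j t) + (J i - J j))).
  - exact Hmu.
  - assert (0 <= k * eta i * rho t ^ 2).
    { apply Rmult_le_pos; [apply Rmult_le_pos; [lra | apply Heta, Hi] | apply pow2_ge_0]. }
    assert (P * (INR m / E) <= P * S) by (apply Rmult_le_compat_l; assumption).
    replace (INR m * P / E) with (P * (INR m / E)) in Hmu_le by (unfold Rdiv; ring).
    specialize (Ha i Hi). lra.
  - eapply Rle_trans; [apply Rabs_plus4_le|]. rewrite !Rabs_Ropp.
    assert (Hsq : 0 <= sqrt Q) by apply sqrt_pos.
    assert (Ha' : Rabs ((a i - a j) * u j t) <= astar * sqrt Q).
    { rewrite Rabs_mult. apply Rmult_le_compat; auto using Rabs_pos. }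
    assert (Hw' : Rabs (sumi m (fun l => w i l * f l (u l t))
                        - sumi m (fun l => w j l * f l (u l t))) <= INR m * Wstar * beta).
    { rewrite <- sumi_minus.
      rewrite (sumi_ext m _ (fun l => (w i l - w j l) * f l (u l t))) by (intros; ring).
      apply Rabs_sumi_mult_le; intros; [apply HWstar | apply Hf]; auto. }
    assert (Heta' : Rabs (k * rho t ^ 2 * (eta i - eta j) * u j t)
                    <= k * etastar * (Q * sqrt Q)).
    { rewrite !Rabs_mult, (Rabs_pos_eq k), (Rabs_pos_eq (rho t ^ 2)); [|apply pow2_ge_0 | lra].
      assert (rho t ^ 2 * (Rabs (eta i - eta j) * Rabs (u j t)) <= Q * (etastar * sqrt Q)).
      { apply Rmult_le_compat; auto using pow2_ge_0.
        - apply Rmult_le_pos; apply Rabs_pos.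
        - apply Rmult_le_compat; auto using Rabs_pos. }
      nra. }
    specialize (HJstar i j Hi Hj). lra.
  - ring.
Qed.

Lemma sq_diff_eventually_dissipative : exists T, 0 < T /\
  forall i j, (i < m)%nat -> (j < m)%nat ->
    dissipative_from (fun t => (u i t - u j t) ^ 2)
      (fun t => 2 * (u i t - u j t) * (u_rhs i t - u_rhs j t)) mu (K ^ 2 / mu) T.
Proof.
  destruct absorbing_ball as [T [HT Hball]].
  exists T. split; [exact HT|]. intros i j Hi Hj t Ht.
  destruct (Hball t Ht) as [Hu Hrho]. split.
  - apply (derivable_pt_lim_sq (fun s => u i s - u j s)), derivable_pt_lim_minus;
      apply (proj1 (Hsol t ltac:(lra))); assumption.
  - apply sq_diff_dissipation; assumption.
Qed.

Lemma sync_constant_nonneg : 0 <= K.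
Proof.
  pose proof (Hastar 0 0 Hm Hm) as Ha0. pose proof (HWstar 0 0 0 Hm Hm Hm) as HW0.
  pose proof (Hetastar 0 0 Hm Hm) as Heta0. pose proof (HJstar 0 0 Hm Hm) as HJ0.
  rewrite Rminus_diag, Rabs_R0 in Ha0, HW0, Heta0, HJ0.
  assert (Hbeta : 0 <= beta) by (eapply Rle_trans; [apply Rabs_pos | apply (Hf 0%nat 0 Hm)]).
  assert (HQ0 : 0 <= Q).
  { destruct absorbing_constants_bounds. eapply Rle_trans; [|exact HQ]. nra. }
  pose proof (sqrt_pos Q). pose proof (pos_INR m).
  assert (0 <= INR m * Wstar * beta) by (apply Rmult_le_pos; [apply Rmult_le_pos|]; lra).
  assert (0 <= astar * sqrt Q) by (apply Rmult_le_pos; lra).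
  assert (0 <= k * etastar * (Q * sqrt Q))
    by (apply Rmult_le_pos; [apply Rmult_le_pos | apply Rmult_le_pos]; lra).
  lra.
Qed.

Lemma synchronization_estimates :
  (forall D, K / mu < D -> forall i j, (i < m)%nat -> (j < m)%nat ->
     Rbar_le (limsup_infty (fun t => Rabs (u i t - u j t))) D) /\
  exists T, 0 < T /\ forall t, T <= t -> forall i j, (i < m)%nat -> (j < m)%nat ->
    (u i t - u j t) ^ 2 <= exp (- mu * (t - T)) * (u i T - u j T) ^ 2 + (K / mu) ^ 2.
Proof.
  destruct sq_diff_eventually_dissipative as [T [HT Hdis]].
  pose proof sync_constant_nonneg as HK0.
  assert (HKmu : 0 <= K / mu) by (apply Rdiv_le_0_compat; lra).
  assert (Hradius : K ^ 2 / mu / mu = (K / mu) ^ 2) by (field; lra).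
  split.
  - intros D HD i j Hi Hj.
    eapply limsup_abs_le_of_dissipative; [exact Hmu | lra | | exact (Hdis i j Hi Hj)].
    rewrite Hradius. nra.
  - exists T. split; [exact HT|]. intros t Ht i j Hi Hj. rewrite <- Hradius.
    refine (dissipative_from_bound _ _ _ _ _ Hmu _ (Hdis i j Hi Hj) t Ht).
    apply Rdiv_le_0_compat; [apply pow2_ge_0 | lra].
Qed.

End Network.

Lemma absorbing_radius_ge mR g2 b α X : 0 < α -> 0 < b -> 0 <= mR -> 0 <= g2 ->
  1 + mR * X ^ 2 / α ^ 2 * (1 + mR * g2 / b ^ 2)
  <= 1 + (mR * g2 / b + b) * (mR * X ^ 2 / α ^ 2)
         / (b * Rmin (/ (/ α * (mR * g2 / b + b))) 1 * Rmin (/ α * (mR * g2 / b + b)) 1).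
Proof.
  intros Hα Hb HmR Hg.
  set (G := 1 + mR * g2 / b ^ 2). set (Y := mR * X ^ 2 / α ^ 2).
  set (C1 := / α * (mR * g2 / b + b)).
  assert (HG : 1 <= G).
  { assert (0 <= mR * g2 / b ^ 2) by (apply Rdiv_le_0_compat; [nra | apply pow2_gt_0; lra]).
    unfold G; lra. }
  assert (HY : 0 <= Y).
  { apply Rdiv_le_0_compat; [apply Rmult_le_pos; [lra | apply pow2_ge_0] | apply pow2_gt_0; lra]. }
  assert (HC1 : 0 < C1).
  { apply Rmult_lt_0_compat; [apply Rinv_0_lt_compat, Hα|].
    assert (0 <= mR * g2 / b) by (apply Rdiv_le_0_compat; nra). lra. }
  assert (Hp1 : 0 < Rmin (/ C1) 1 <= 1).
  { split; [apply Rmin_glb_lt; [apply Rinv_0_lt_compat|]; lra | apply Rmin_r]. }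
  assert (Hp2 : 0 < Rmin C1 1 <= 1) by (split; [apply Rmin_glb_lt; lra | apply Rmin_r]).
  set (p := Rmin (/ C1) 1 * Rmin C1 1).
  assert (Hp : 0 < p <= 1) by (unfold p; split; [apply Rmult_lt_0_compat | nra]; lra).
  replace ((mR * g2 / b + b) * Y / (b * Rmin (/ C1) 1 * Rmin C1 1)) with (Y * G * / p)
    by (unfold G, p; field; lra).
  assert (Hinv : 1 <= / p) by (rewrite <- Rinv_1; apply Rinv_le_contravar; lra).
  assert (0 <= Y * G) by nra.
  nra.
Qed.

Lemma sync_radius_lt α mR P K E eps : 0 < α -> 0 < mR -> 0 < P -> 0 < E -> 0 < eps ->
  / (mR * eps) * K * E < P -> K / (α + mR * P / E) < eps.
Proof.
  intros Hα HmR HP HE Heps Hth.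
  assert (Hrate : 0 < mR * P / E) by (apply Rdiv_lt_0_compat; [apply Rmult_lt_0_compat|]; lra).
  destruct (Rle_lt_dec K 0) as [HK | HK].
  - apply Rle_lt_trans with 0; [|exact Heps].
    apply Rmult_le_0_r; [exact HK | left; apply Rinv_0_lt_compat; lra].
  - apply Rle_lt_trans with (K / (mR * P / E)).
    + unfold Rdiv at 1 2. apply Rmult_le_compat_l; [lra|]. apply Rinv_le_contravar; lra.
    + apply (Rmult_lt_compat_l (mR * eps)) in Hth; [|apply Rmult_lt_0_compat; lra].
      replace (mR * eps * (/ (mR * eps) * K * E)) with (K * E) in Hth by (field; lra).
      apply (Rmult_lt_reg_r (mR * P / E)); [exact Hrate|].
      replace (K / (mR * P / E) * (mR * P / E)) with K by (field; lra).
      apply (Rmult_lt_reg_r E); [exact HE|].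
      replace (eps * (mR * P / E) * E) with (mR * eps * P) by (field; lra). exact Hth.
Qed.

Theorem theorem3p1
  (m : nat) (a : nat -> R) (w : nat -> nat -> R) (f phi : nat -> R -> R)
  (k : R) (J : nat -> R) (P r V : R) (gam : nat -> R) (b beta : R)
  (eta : nat -> R) (eps : R) :
  (2 <= m)%nat ->
  0 < r -> 0 < P -> 0 < b -> 0 < beta -> 0 < k ->
  (forall i, (i < m)%nat -> 0 < a i) ->
  (forall i, (i < m)%nat -> 0 < eta i) ->
  (forall i, (i < m)%nat -> k < a i) ->
  (forall i, (i < m)%nat -> locally_lipschitz (f i)) ->
  (forall i, (i < m)%nat -> locally_lipschitz (phi i)) ->
  (forall i s, (i < m)%nat -> Rabs (f i s) <= beta) ->
  (forall i s, (i < m)%nat -> phi i s = 1 - eta i * s ^ 2) ->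
  0 < eps ->
  let amin := mini m a in
  let W := maxi m (fun i => maxi m (fun j => Rabs (w i j))) in
  let Jm := maxi m (fun i => Rabs (J i)) in
  let gam2 := maxi m (fun i => gam i ^ 2) in
  let C1 := / (amin - k) * (INR m * gam2 / b + b) in
  let C2 := (INR m * gam2 / b + b) * (INR m * (INR m * W * beta + Jm) ^ 2 / (amin - k) ^ 2) in
  let mu0 := b * Rmin (/ C1) 1 in
  let Q := 1 + C2 / (mu0 * Rmin C1 1) in
  let astar := maxi m (fun i => maxi m (fun j => Rabs (a i - a j))) in
  let Wstar := maxi m (fun i => maxi m (fun j => maxi m (fun l => Rabs (w i l - w j l)))) in
  let etastar := maxi m (fun i => maxi m (fun j => Rabs (eta i - eta j))) in
  let Jstar := maxi m (fun i => maxi m (fun j => Rabs (J i - J j))) in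
  let E := 1 + exp (r * (sqrt Q + Rabs V)) in
  let Pstar := / (INR m * eps) *
      (INR m * Wstar * beta + astar * sqrt Q + k * etastar * (Q * sqrt Q) + Jstar) * E in
  let mu := (amin - k) + INR m * P / E in
  Pstar < P ->
  (* approximate synchronization: sup over initial states of
     max_{i<j} limsup |u_i - u_j| is < eps *)
  (exists D : R, D < eps /\
     forall (u : nat -> R -> R) (rho : R -> R),
       is_solution m a w f phi k J P r V gam b u rho ->
       forall i j : nat, (i < j)%nat -> (j < m)%nat ->
         Rbar_le (limsup_infty (fun t => Rabs (u i t - u j t))) (Finite D)) /\
  (* uniform exponential rate mu(P) > 0 *)
  0 < mu /\
  (exists D : R, D < eps /\
     forall (u : nat -> R -> R) (rho : R -> R),
       is_solution m a w f phi k J P r V gam b u rho ->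
       exists T : R, 0 <= T /\
         forall t : R, T < t ->
         forall i j : nat, (i < m)%nat -> (j < m)%nat -> i <> j ->
           (u i t - u j t) ^ 2 <= exp (- mu * (t - T)) * (u i T - u j T) ^ 2 + D ^ 2).
Proof.
  intros Hm Hr HP Hb _ Hk _ Heta Hka _ _ Hf Hphi Heps
    amin W Jm gam2 C1 C2 mu0 Q astar Wstar etastar Jstar E Pstar mu HPs.
  assert (Hm0 : (0 < m)%nat) by lia.
  assert (Hamin : k < amin) by (apply mini_glb_lt; auto).
  assert (Hgam : forall i, (i < m)%nat -> gam i ^ 2 <= gam2)
    by exact (maxi_ge m (fun i => gam i ^ 2)).
  assert (HQ : 1 + INR m * (INR m * W * beta + Jm) ^ 2 / (amin - k) ^ 2
                 * (1 + INR m * gam2 / b ^ 2) <= Q).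
  { apply absorbing_radius_ge; [lra | exact Hb | apply pos_INR |].
    eapply Rle_trans; [apply (pow2_ge_0 (gam 0%nat)) | apply Hgam, Hm0]. }
  assert (HE : 0 < E) by (pose proof (exp_pos (r * (sqrt Q + Rabs V))); unfold E; lra).
  assert (Hmu : 0 < mu).
  { assert (0 < INR m * P / E); [|unfold mu; lra].
    apply Rdiv_lt_0_compat; [|exact HE].
    apply Rmult_lt_0_compat; [apply lt_0_INR, Hm0 | exact HP]. }
  set (K := INR m * Wstar * beta + astar * sqrt Q + k * etastar * (Q * sqrt Q) + Jstar).
  assert (HD : K / mu < eps) by (apply sync_radius_lt; auto; [lra | apply lt_0_INR, Hm0]).
  pose proof (fun u rho (Hsol : is_solution m a w f phi k J P r V gam b u rho) =>
    synchronization_estimates Hsol Hm0 Hk Hb (Rlt_le _ _ HP) Hamin (mini_le m a)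
      (fun i Hi => Rlt_le _ _ (Heta i Hi)) Hphi Hf (maxi2_ge m (fun i j => Rabs (w i j)))
      (maxi_ge m (fun i => Rabs (J i))) Hgam HQ Hr (maxi2_ge m (fun i j => Rabs (a i - a j)))
      (maxi3_ge m (fun i j l => Rabs (w i l - w j l)))
      (maxi2_ge m (fun i j => Rabs (eta i - eta j))) (maxi2_ge m (fun i j => Rabs (J i - J j)))
      Hmu (Rle_refl mu) (Rle_refl K)) as Hsync.
  split; [|split; [exact Hmu|]].
  - exists ((K / mu + eps) / 2). split; [lra|]. intros u rho Hsol i j Hij Hj.
    apply (proj1 (Hsync u rho Hsol)); [lra | lia | exact Hj].
  - exists (K / mu). split; [exact HD|]. intros u rho Hsol.
    destruct (proj2 (Hsync u rho Hsol)) as [T [HT Hdecay]].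
    exists T. split; [lra|]. intros t Ht i j Hi Hj _. apply Hdecay; [lra | exact Hi | exact Hj].
Qed.
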